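(* Let $\mathcal{C}_{\mathrm{tr}}$ be the class of all transitive permutation groups. Then \[ \lim_{n} \frac{\mathbf{F}_{\mathcal{C}_{\mathrm{tr}}}(n)}{n} = \frac{1}{2}. \]
   Context: For a transitive permutation group $G$ on a finite set $\Omega$ with $|\Omega|\ge 2$, a subset $A\subseteq\Omega$ is self-separable for $G$ if there exists $g\in G$ with $A\cap A^g=\emptyset$; $\mathbf{m}(G)$ is the minimum cardinality of a subset of $\Omega$ that is not self-separable for $G$. For a family $\mathcal{C}$ of transitive permutation groups, $\mathcal{C}_n$ is the set of members of degree $n$, $X_{\mathcal{C}}=\{n:\mathcal{C}_n\ne\emptyset\}$, and $\mathbf{F}_{\mathcal{C}}:X_{\mathcal{C}}\to\mathbb{N}$, $n\mapsto\max\{\mathbf{m}(G):G\in\mathcal{C}_n\}$. *)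

From mathcomp Require Import all_boot all_fingroup.
From Stdlib Require Import Reals.
Set Implicit Arguments. Unset Strict Implicit. Unset Printing Implicit Defensive.
Local Open Scope group_scope.

(* Permutation groups of degree n are subgroups of Sym('I_n); every permutation
   group of degree n is permutation-isomorphic to one of these, and m(G) is
   invariant under permutation isomorphism. *)

Definition self_separable n (G : {group {perm 'I_n}}) (A : {set 'I_n}) : bool :=
  [exists g in G, A :&: [set g x | x in A] == set0].

(* The whole set
   [set: 'I_n] (of size n) is never self-separable when n > 0, so the default
   value n of the fold never exceeds the true minimum. *)
Definition mG n (G : {group {perm 'I_n}}) : nat :=
  \big[minn/n]_(A : {set 'I_n} | ~~ self_separable G A) #|A|.

Definition transitive_grp n (G : {group {perm 'I_n}}) : bool :=
  [transitive G, on [set: 'I_n] | 'P].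

Definition Ftr n : nat :=
  \max_(G : {group {perm 'I_n}} | transitive_grp G) mG G.

From mathcomp Require Import all_boot all_fingroup zify.
From Stdlib Require Import Reals Lra Psatz.
Set Implicit Arguments. Unset Strict Implicit. Unset Printing Implicit Defensive.

(* The full symmetric group is transitive and separates every set of size at most n/2
   from itself, while no set of size > n/2 can be disjoint from a translate of itself.
   Hence F(n) = n/2 + 1 (rounded down) for n > 0, and F(n)/n tends to 1/2. *)

Lemma nth_index_inj (T : eqType) (s r : seq T) :
  (forall x, x \in s) -> uniq r -> size r = size s ->
  injective (fun x => nth x r (index x s)).
Proof.
move=> s_total r_uniq size_rs x y.
have index_lt z : index z s < size r by rewrite size_rs index_mem.
rewrite (set_nth_default x y (index_lt y)) => /eqP.
rewrite nth_uniq // => /eqP eq_index.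
by rewrite -(nth_index x (s_total x)) eq_index nth_index.
Qed.

Lemma separating_perm (T : finType) (A : {set T}) : 2 * #|A| <= #|T| ->
  exists g : {perm T}, A :&: [set g x | x in A] == set0.
Proof.
move=> small_A.
have le_A_compl : #|A| <= #|~: A| by have := cardsC A; lia.
pose s := enum A ++ enum (~: A); pose r := enum (~: A) ++ enum A.
have s_total x : x \in s by rewrite mem_cat !mem_enum inE orbN.
have r_uniq : uniq r.
  rewrite cat_uniq !enum_uniq andbT /=; apply/hasPn => x.
  by rewrite !mem_enum inE => ->.
have size_rs : size r = size s by rewrite !size_cat addnC.
(* g matches the two enumerations position by position, so it maps A into ~: A. *)
pose g := perm (nth_index_inj s_total r_uniq size_rs).
have gA x : x \in A -> g x \in ~: A.
  move=> xA; rewrite permE index_cat mem_enum xA nth_cat.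
  have lt_index : index x (enum A) < size (enum (~: A)).
    by rewrite -cardE (leq_trans _ le_A_compl) // cardE index_mem mem_enum.
  by rewrite lt_index -(mem_enum (~: A)) mem_nth.
exists g; rewrite setI_eq0 disjoint_sym disjoint_subset.
by apply/subsetP => _ /imsetP [x xA ->]; move: (gA x xA); rewrite !inE.
Qed.

Lemma large_not_self_separable n (G : {group {perm 'I_n}}) (A : {set 'I_n}) :
  n < 2 * #|A| -> ~~ self_separable G A.
Proof.
move=> large_A; apply/existsP => -[g /andP [_ /eqP disjoint_gA]].
have := cardsUI A [set g x | x in A].
rewrite disjoint_gA cards0 addn0 (card_imset _ (@perm_inj _ g)).
have := max_card (A :|: [set g x | x in A]); rewrite card_ord; lia.
Qed.

Lemma self_separable_Sym n (A : {set 'I_n}) :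
  2 * #|A| <= n -> self_separable [set: {perm 'I_n}]%G A.
Proof.
rewrite -[n in _ <= n]card_ord => /separating_perm [g disjoint_gA].
by apply/existsP; exists g; rewrite inE disjoint_gA.
Qed.

Lemma geq_bigminn_cond (I : eqType) (r : seq I) (P : pred I) (F : I -> nat) x i0 :
  i0 \in r -> P i0 -> \big[minn/x]_(i <- r | P i) F i <= F i0.
Proof.
move=> + Pi0; elim: r => // i r IHr; rewrite inE big_cons => /predU1P [<-|r_i0].
  by rewrite Pi0 geq_minl.
by case: (P i); rewrite ?(leq_trans (geq_minr _ _)) ?IHr.
Qed.

Lemma mG_le_half n (G : {group {perm 'I_n}}) : 0 < n -> mG G <= n./2.+1.
Proof.
move=> n_gt0; have le_half_n : n./2.+1 <= n by lia.
pose A := [set widen_ord le_half_n i | i : 'I_n./2.+1].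
have card_A : #|A| = n./2.+1.
  by rewrite card_imset ?card_ord // => i j /(congr1 val) /= /val_inj.
have nsep_A : ~~ self_separable G A by apply: large_not_self_separable; rewrite card_A; lia.
by rewrite -card_A geq_bigminn_cond ?mem_index_enum.
Qed.

Lemma mG_Sym n : 0 < n -> mG [set: {perm 'I_n}]%G = n./2.+1.
Proof.
move=> n_gt0; apply/eqP; rewrite eqn_leq mG_le_half //=.
apply: (big_ind (fun m => n./2.+1 <= m)) => [|x y lex ley|A nsep_A]; first lia.
  by rewrite leq_min lex ley.
rewrite ltnNge; apply: contra nsep_A => small_A.
by apply: self_separable_Sym; lia.
Qed.

Lemma transitive_Sym n : 0 < n -> transitive_grp [set: {perm 'I_n}]%G.
Proof.
move=> n_gt0; apply/imsetP; exists (Ordinal n_gt0); rewrite ?inE //.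
apply/setP => y; rewrite inE; apply/esym/orbitP.
by exists (tperm (Ordinal n_gt0) y); rewrite ?inE //= apermE tpermL.
Qed.

Lemma Ftr_eq n : 0 < n -> Ftr n = n./2.+1.
Proof.
move=> n_gt0; apply/eqP; rewrite eqn_leq; apply/andP; split.
  by apply/bigmax_leqP => G _; apply: mG_le_half.
rewrite -(mG_Sym n_gt0).
exact: (@leq_bigmax_cond _ (@transitive_grp n) (@mG n) _ (transitive_Sym n_gt0)).
Qed.

Lemma half_ratio_bound (a m : R) : (2 * a <= m <= 2 * a + 1)%R ->
  (0 < m)%R -> (Rabs ((a + 1) / m - 1 / 2) <= / m)%R.
Proof.
move=> [le_2a_m le_m_2a1] m_gt0.
have inv_m_gt0 : (0 < / m)%R by apply: Rinv_0_lt_compat.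
have m_inv_m : (m * / m = 1)%R by field; lra.
have -> : ((a + 1) / m - 1 / 2 = / m * (2 * a + 2 - m) / 2)%R by field; lra.
by rewrite Rabs_pos_eq; nra.
Qed.

Lemma Ftr_ratio_bound n : 0 < n ->
  (Rabs (INR (Ftr n) / INR n - 1 / 2) <= / INR n)%R.
Proof.
move=> n_gt0; rewrite Ftr_eq // S_INR; apply: half_ratio_bound.
  have [lo hi] : (2 * n./2 <= n)%coq_nat /\ (n <= 2 * n./2 + 1)%coq_nat.
    by split; apply/leP; lia.
  by move/le_INR: lo; move/le_INR: hi; rewrite plus_INR !mult_INR /=; lra.
by apply/lt_0_INR/ltP.
Qed.

Theorem theoremB :
  Un_cv (fun n : nat => (INR (Ftr n) / INR n)%R) (1 / 2)%R.
Proof.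
move=> eps eps_gt0; have [N [inv_N_lt N_gt0]] := archimed_cor1 eps eps_gt0.
exists N => n le_Nn; rewrite /R_dist.
have n_gt0 : 0 < n by apply/ltP; lia.
have INR_N_le_n : (0 < INR N <= INR n)%R by split; [apply: lt_0_INR | apply: le_INR].
apply: Rle_lt_trans (Ftr_ratio_bound n_gt0) _.
by apply: Rle_lt_trans inv_N_lt; apply: Rinv_le_contravar; lra.
Qed.
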